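(* Let $a,b,u$ be positive integers. In coordinates $(i,j)$ with $i$ the row index (increasing downward, so ''north'' means decreasing $i$) and $j$ the column index (increasing eastward), a path means a lattice path with unit steps going east $(0,1)$ or north $(-1,0)$ from its SW endpoint to its NE endpoint, paths are nonintersecting if they share no vertex, and a diagonal chain of size $s$ is a set $\{(i_1,j_1),\dots,(i_s,j_s)\}$ with $i_1<\dots<i_s$ and $j_1<\dots<j_s$. (i) Assume $u\le\min(a,b)$. Let $X_p=(a-u+p,p)$ and $Y_p=(p,b-u+p)$ for $1\le p\le u$, let $R_{\rm hex}\subseteq\mathbb{R}^2$ be the closed hexagon with vertices $(1,1),X_1,X_u,(a,b),Y_u,Y_1$, and let $C\subseteq R_{\rm hex}\cap\mathbb{Z}^2$. Then there exists a collection of $u$ nonintersecting paths $H_1,\dots,H_u$, $H_p$ with endpoints $X_p$ and $Y_p$, whose union contains $C$, if and only if all diagonal chains in $C$ have size $\le u$. For (ii) and (ii') assume $C\subseteq([1,a]\times[1,b])\cap\mathbb{Z}^2$. (ii) If $u<a$, then there exists a collection of $u$ nonintersecting paths, the $p$-th with endpoints $(a-u+p,1)$ and $(p,b)$ ($1\le p\le u$), whose union contains $C$, if and only if $u\le b$ and all diagonal chains of $C$ have size $\le u$. If $u=a$, then (regardless of $b$) there exists a unique collection of $u$ nonintersecting paths, the $p$-th with endpoints $(a-u+p,1)$ and $(p,b)$, whose union contains $C$, and each of these paths is straight horizontal. (ii') If $u<b$, then there exists a collection of $u$ nonintersecting paths, the $q$-th with endpoints $(1,b-u+q)$ and $(a,q)$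 ($1\le q\le u$), whose union contains $C$, if and only if $u\le a$ and all diagonal chains of $C$ have size $\le u$. If $u=b$, then (regardless of $a$) there exists a unique collection of $u$ nonintersecting paths, the $q$-th with endpoints $(1,b-u+q)$ and $(a,q)$, whose union contains $C$, and each of these paths is straight vertical.
   Context: A path is straight horizontal if it contains no vertical edge and straight vertical if it contains no horizontal edge. All paths are in the lattice $\mathbb{Z}^2$ (for (ii), (ii') inside the grid $[1,a]\times[1,b]$). *)

(* Lattice points are pairs of integers (i, j):
   i = row index (increasing downward, "north" = decreasing i),
   j = column index (increasing eastward). *)
From mathcomp Require Import all_boot all_order all_algebra.
Set Implicit Arguments. Unset Strict Implicit. Unset Printing Implicit Defensive.
Import Order.TTheory GRing.Theory Num.Theory.
Local Open Scope ring_scope.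

Definition pt := (int * int)%type.

Definition lstep (x y : pt) : bool :=
  (y == (x.1, x.2 + 1)) || (y == (x.1 - 1, x.2)).

Definition lpath (sw ne : pt) (P : seq pt) : bool :=
  if P is x :: r then [&& x == sw, path lstep x r & last x r == ne] else false.

Definition nonintersecting (u : nat) (H : nat -> seq pt) : Prop :=
  forall p q : nat, (1 <= p <= u)%N -> (1 <= q <= u)%N -> p <> q ->
    forall v : pt, v \in H p -> v \in H q -> False.

Definition path_family (u : nat) (sw ne : nat -> pt) (H : nat -> seq pt) : Prop :=
  (forall p : nat, (1 <= p <= u)%N -> lpath (sw p) (ne p) (H p)) /\ nonintersecting u H.

Definition covers (u : nat) (H : nat -> seq pt) (C : pt -> Prop) : Prop :=
  forall v : pt, C v -> exists2 p : nat, (1 <= p <= u)%N & v \in H p.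

Definition diag_lt (x y : pt) : bool := (x.1 < y.1) && (x.2 < y.2).

Definition diag_chain (C : pt -> Prop) (c : seq pt) : Prop :=
  (forall v : pt, v \in c -> C v) /\ sorted diag_lt c.

Definition chains_le (C : pt -> Prop) (u : nat) : Prop :=
  forall c : seq pt, diag_chain C c -> (size c <= u)%N.

Definition straight_horizontal (P : seq pt) : bool :=
  if P is x :: r then path (fun v w : pt => v.1 == w.1) x r else true.
Definition straight_vertical (P : seq pt) : bool :=
  if P is x :: r then path (fun v w : pt => v.2 == w.2) x r else true.

Definition hex_verts (a b u : nat) : seq pt :=
  [:: (1, 1); (a%:Z - u%:Z + 1, 1); (a%:Z, u%:Z); (a%:Z, b%:Z);
      (u%:Z, b%:Z); (1, b%:Z - u%:Z + 1)].

(* v lies in the closed hexagon = convex hull of its vertices (the hexagon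
   is convex); weights taken rational, which gives the same lattice points
   as real weights since the vertices are lattice points *)
Definition in_hexagon (a b u : nat) (v : pt) : Prop :=
  exists w : nat -> rat,
    (forall k, 0 <= w k) /\ \sum_(k < 6) w k = 1 /\
    \sum_(k < 6) w k * ((nth (0, 0) (hex_verts a b u) k).1)%:~R = (v.1)%:~R /\
    \sum_(k < 6) w k * ((nth (0, 0) (hex_verts a b u) k).2)%:~R = (v.2)%:~R.

Definition in_grid (a b : nat) (v : pt) : Prop :=
  (1 <= v.1 <= a%:Z) /\ (1 <= v.2 <= b%:Z).

Definition hexX (a u : nat) (p : nat) : pt := (a%:Z - u%:Z + p%:Z, p%:Z).
Definition hexY (b u : nat) (p : nat) : pt := (p%:Z, b%:Z - u%:Z + p%:Z).
Definition rowSW (a u : nat) (p : nat) : pt := (a%:Z - u%:Z + p%:Z, 1).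
Definition rowNE (b : nat) (p : nat) : pt := (p%:Z, b%:Z).
Definition colSW (a : nat) (q : nat) : pt := (a%:Z, q%:Z).
Definition colNE (b u : nat) (q : nat) : pt := (1, b%:Z - u%:Z + q%:Z).

(* A lattice path never contains two points of a diagonal chain, so u paths
   covering C force all chains of C to have size at most u; the extra
   conditions u <= b in (ii) and u <= a in (ii') come from counting the points
   where the first paths cross one anti-diagonal.

   Conversely, adjoin to C two diagonal chains of u virtual points, the p-th
   ones weakly north-west of the p-th endpoints, placed so that chains still
   have size at most u. Say that v has rank >= p when a chain of p of these points lies
   weakly north-west of v. The p-th level, made of the v of rank >= p with
   v - (1,1) of rank < p, is a staircase whose part between the p-th endpoints
   is the path H_p. Distinct levels are disjoint, and every point of C lies on
   the level of its rank, between the endpoints thanks to the virtual points.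
   For u = a (resp. u = b) the only candidates are the rows (resp. columns). *)

From mathcomp Require Import all_boot all_order all_algebra.
From mathcomp Require Import zify ring.
From Stdlib Require Import ClassicalEpsilon Classical.
Set Implicit Arguments. Unset Strict Implicit. Unset Printing Implicit Defensive.
Import Order.TTheory GRing.Theory Num.Theory.
Local Open Scope ring_scope.

(** * Lattice paths *)

Definition weakly_ne (x y : pt) : bool := (y.1 <= x.1) && (x.2 <= y.2).

Lemma weakly_ne_refl : reflexive weakly_ne.
Proof. by move=> x; rewrite /weakly_ne !lexx. Qed.

Lemma weakly_ne_trans : transitive weakly_ne.
Proof. by move=> y x z; rewrite /weakly_ne; lia. Qed.

Lemma lstep_weakly_ne x y : lstep x y -> weakly_ne x y.
Proof. by rewrite /lstep /weakly_ne => /orP[] /eqP -> /=; lia. Qed.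

Lemma lstep_diff x y : lstep x y -> y.1 - y.2 = x.1 - x.2 - 1.
Proof. by rewrite /lstep => /orP[] /eqP -> /=; lia. Qed.

Lemma path_weakly_ne_last x r :
  path lstep x r -> {in x :: r, forall y, weakly_ne y (last x r)}.
Proof.
elim: r x => [|z r IH] x /=.
  by move=> _ y; rewrite inE => /eqP ->; apply: weakly_ne_refl.
case/andP=> /lstep_weakly_ne xz /IH {}IH y; rewrite inE => /predU1P[->|]; last exact: IH.
exact: weakly_ne_trans xz (IH z (mem_head _ _)).
Qed.

Lemma lpath_box sw ne P v : lpath sw ne P -> v \in P -> weakly_ne sw v && weakly_ne v ne.
Proof.
case: P => [//|x r] /= /and3P[/eqP <- xr /eqP <-] v_xr.
rewrite (path_weakly_ne_last xr v_xr) andbT.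
move: v_xr; rewrite inE => /predU1P[->|]; first exact: weakly_ne_refl.
by apply/allP; apply: order_path_min weakly_ne_trans (sub_path lstep_weakly_ne xr).
Qed.

Lemma pairwise_weakly_ne_no_diag s :
  pairwise weakly_ne s -> {in s &, forall y z, ~~ diag_lt y z}.
Proof.
rewrite /diag_lt; elim: s => [//|x s IH]; rewrite pairwise_cons => /andP[/allP xs /IH {}IH].
move=> y z; rewrite !inE => /predU1P[->|ys] /predU1P[->|zs]; try exact: IH.
- by rewrite !ltxx.
- by have := xs z zs; rewrite /weakly_ne; lia.
- by have := xs y ys; rewrite /weakly_ne; lia.
Qed.

Lemma lpath_no_diag sw ne P : lpath sw ne P -> {in P &, forall y z, ~~ diag_lt y z}.
Proof.
case: P => [//|x r] /= /and3P[_ xr _]; apply: pairwise_weakly_ne_no_diag.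
rewrite -(sorted_pairwise weakly_ne_trans) /=.
exact: (sub_path lstep_weakly_ne xr).
Qed.

Lemma lpath_meets_antidiagonal sw ne P (d : int) :
  lpath sw ne P -> ne.1 - ne.2 <= d <= sw.1 - sw.2 -> has (fun v : pt => v.1 - v.2 == d) P.
Proof.
case: P => [//|x r] /= /and3P[/eqP -> + /eqP <-] {x}.
elim: r sw => [|w r IH] x /=; first by rewrite orbF; lia.
case/andP=> /lstep_diff xw /IH {}IH d_range.
have [//|d_ne] := eqVneq (x.1 - x.2) d.
by rewrite IH //; lia.
Qed.

Lemma lstep_not_back x y : lstep x y -> ~~ weakly_ne y x.
Proof. by rewrite /lstep /weakly_ne => /orP[] /eqP -> /=; lia. Qed.

(* Towards a point [e] in its own row or column, a lattice path has only one possible step. *)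
Lemma straight_step x y e : lstep x y -> weakly_ne y e -> x.1 = e.1 \/ x.2 = e.2 ->
  y = (if x.1 == e.1 then (x.1, x.2 + 1) else (x.1 - 1, x.2)) /\ (y.1 = e.1 \/ y.2 = e.2).
Proof.
rewrite /lstep /weakly_ne => /orP[] /eqP -> /=; case: eqP => x_e ye straight;
  by split; [congr pair | ]; lia.
Qed.

Lemma path_straight_unique x r r' : path lstep x r -> path lstep x r' ->
  last x r = last x r' -> x.1 = (last x r).1 \/ x.2 = (last x r).2 -> r = r'.
Proof.
elim: r x r' => [|y r IH] x [|z r'] //= xr xr' last_eq straight.
- case/andP: xr' => /lstep_not_back/negP xz z_r'; case: xz.
  by rewrite last_eq; apply: path_weakly_ne_last z_r' _ (mem_head _ _).
- case/andP: xr => /lstep_not_back/negP xy y_r; case: xy.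
  by rewrite -last_eq; apply: path_weakly_ne_last y_r _ (mem_head _ _).
case/andP: xr => xy y_r; case/andP: xr' => xz z_r'.
have [y_eq y_straight] := straight_step xy (path_weakly_ne_last y_r (mem_head _ _)) straight.
have z_straight : x.1 = (last z r').1 \/ x.2 = (last z r').2 by rewrite -last_eq.
have [z_eq _] := straight_step xz (path_weakly_ne_last z_r' (mem_head _ _)) z_straight.
have y_is_z : y = z by rewrite y_eq z_eq -last_eq.
rewrite -y_is_z in z_r' last_eq *; congr cons; exact: IH y_r z_r' last_eq y_straight.
Qed.

Lemma lpath_straight_unique sw ne P Q :
  lpath sw ne P -> lpath sw ne Q -> sw.1 = ne.1 \/ sw.2 = ne.2 -> P = Q.
Proof.
case: P => [//|x r]; case: Q => [//|y r'] /= /and3P[/eqP -> xr /eqP r_last].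
case/and3P=> /eqP -> yr /eqP r'_last straight; congr cons.
by apply: path_straight_unique xr yr _ _; rewrite ?r_last ?r'_last.
Qed.

Lemma lpath_cat x y y' z P Q :
  lpath x y P -> lstep y y' -> lpath y' z Q -> lpath x z (P ++ Q).
Proof.
case: P => [//|x0 r] /= /and3P[x0x r_path /eqP r_last] yy'.
case: Q => [//|y0 r'] /= /and3P[/eqP -> r'_path r'_last].
by rewrite /= x0x cat_path last_cat /= r_path r_last yy' r'_path.
Qed.

Definition lattice_line (f : nat -> pt) (n : nat) : seq pt := [seq f k | k <- iota 0 n.+1].

Lemma lpath_lattice_line (f : nat -> pt) n :
  (forall k, lstep (f k) (f k.+1)) -> lpath (f 0%N) (f n) (lattice_line f n).
Proof.
move=> f_step; rewrite /lattice_line /= eqxx /=.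
suff: forall m, path lstep (f m) [seq f k | k <- iota m.+1 n] &&
    (last (f m) [seq f k | k <- iota m.+1 n] == f (m + n)%N) by apply.
elim: n => [|n IH] m /=; first by rewrite addn0 eqxx.
by rewrite f_step -addSnnS IH.
Qed.

Definition north_run (r j : int) (m : nat) : seq pt := lattice_line (fun k => (r - k%:Z, j)) m.

Lemma lpath_north_run r j m : lpath (r, j) (r - m%:Z, j) (north_run r j m).
Proof.
have := @lpath_lattice_line (fun k => (r - k%:Z, j)) m; rewrite subr0; apply=> k.
by rewrite /lstep /=; apply/orP; right; apply/eqP; congr pair; lia.
Qed.

Lemma lpath_north_run_to r r' j :
  r' <= r -> lpath (r, j) (r', j) (north_run r j (absz (r - r')%R)).
Proof.
by move=> r'_le; have := lpath_north_run r j (absz (r - r')%R); rewrite (_ : r - _ = r') //; lia.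
Qed.

Lemma mem_north_run r j m (v : pt) :
  (v \in north_run r j m) = (v.2 == j) && (r - m%:Z <= v.1 <= r).
Proof.
case: v => i k /=; apply/mapP/idP => [[n] | /andP[/eqP -> ik]].
  by rewrite mem_iota => n_lt [-> ->]; rewrite eqxx /=; lia.
by exists (absz (r - i)%R); [rewrite mem_iota | congr pair]; lia.
Qed.

(* Column [k] of [staircase t j n] runs north from row [t (k - 1)] to row [t k]. *)
Fixpoint staircase (t : int -> int) (j : int) (n : nat) {struct n} : seq pt :=
  let run := north_run (t (j - 1)) j (absz (t (j - 1) - t j)%R) in
  if n is n'.+1 then run ++ staircase t (j + 1) n' else run.

Section Staircase.

Variables (t : int -> int) (j : int) (n : nat).
Hypothesis t_nonincr : forall k : int, j <= k <= j + n%:Z -> t k <= t (k - 1).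

Lemma lpath_staircase : lpath (t (j - 1), j) (t (j + n%:Z), j + n%:Z) (staircase t j n).
Proof.
elim: n j t_nonincr => [|m IH] i t_dec.
  by rewrite addr0; apply: lpath_north_run_to; have := t_dec i; lia.
apply: (@lpath_cat _ (t i, i) (t i, i + 1)).
  by apply: lpath_north_run_to; have := t_dec i; lia.
  by rewrite /lstep /= eqxx.
have -> : i + m.+1%:Z = i + 1 + m%:Z by lia.
by move: (IH (i + 1)); rewrite addrK; apply=> k k_range; apply: t_dec; lia.
Qed.

Lemma mem_staircase (v : pt) :
  (v \in staircase t j n) = (j <= v.2 <= j + n%:Z) && (t v.2 <= v.1 <= t (v.2 - 1)).
Proof.
case: v => v1 v2 /=.
elim: n j t_nonincr => [|m IH] i t_dec.
  rewrite mem_north_run /=; have [->|] := eqVneq v2 i; last by lia.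
  by have := t_dec i; lia.
rewrite mem_cat mem_north_run IH /= => [|k k_range]; last by apply: t_dec; lia.
have [->|v2_ne] := eqVneq v2 i; first by have := t_dec i; lia.
by lia.
Qed.

End Staircase.

(** * Diagonal chains *)

Lemma diag_lt_trans : transitive diag_lt.
Proof. by move=> y x z; rewrite /diag_lt; lia. Qed.

Lemma diag_lt_irr : irreflexive diag_lt.
Proof. by move=> x; rewrite /diag_lt ltxx. Qed.

Lemma diag_lt_fst : {homo (@fst int int) : x y / diag_lt x y >-> x < y}.
Proof. by move=> x y /andP[]. Qed.

Lemma diag_lt_snd : {homo (@snd int int) : x y / diag_lt x y >-> x < y}.
Proof. by move=> x y /andP[]. Qed.

Lemma sorted_diag_comparable c :
  sorted diag_lt c -> {in c &, forall x y, x != y -> diag_lt x y || diag_lt y x}.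
Proof.
rewrite (sorted_pairwise diag_lt_trans); elim: c => [//|z c IH].
rewrite pairwise_cons => /andP[/allP z_c /IH {}IH] x y.
rewrite !inE => /predU1P[->|xc] /predU1P[->|yc] x_ne_y.
- by rewrite eqxx in x_ne_y.
- by rewrite z_c.
- by rewrite z_c ?orbT.
- exact: IH.
Qed.

Lemma uniq_size_le_range (s : seq int) (lo : int) (n : nat) :
  uniq s -> (forall k, k \in s -> lo <= k < lo + n%:Z) -> (size s <= n)%N.
Proof.
move=> s_uniq s_range; rewrite -(size_iota 0 n) -(size_map (fun k : nat => lo + k%:Z)).
apply: uniq_leq_size => // k /s_range k_range; apply/mapP.
by exists (absz (k - lo)%R); rewrite ?mem_iota; lia.
Qed.

Lemma size_le_of_cover (T : eqType) (s : seq T) (A : nat -> seq T) (u : nat) :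
  uniq s -> (forall x, x \in s -> exists2 p, (1 <= p <= u)%N & x \in A p) ->
  (forall p, (1 <= p <= u)%N -> {in s &, forall x y, x \in A p -> y \in A p -> x = y}) ->
  (size s <= u)%N.
Proof.
move=> s_uniq s_cover A_single.
pose idx x := find (fun q => x \in A q.+1) (iota 0 u).
have idxP x : x \in s -> (idx x < u)%N /\ x \in A (idx x).+1.
  move=> xs; have [p p_range x_p] := s_cover x xs.
  have has_x : has (fun q => x \in A q.+1) (iota 0 u).
    by apply/hasP; exists p.-1; [rewrite mem_iota | rewrite prednK]; lia.
  have idx_lt : (idx x < u)%N by rewrite -[u](size_iota 0) -has_find.
  by split=> //; have := nth_find 0%N has_x; rewrite nth_iota.
rewrite -(size_map idx) -[u](size_iota 0); apply: uniq_leq_size.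
  rewrite map_inj_in_uniq // => x y xs ys idx_eq.
  have [x_lt x_A] := idxP x xs; have [_ y_A] := idxP y ys.
  have x_range : (1 <= (idx x).+1 <= u)%N by lia.
  by apply: (A_single _ x_range) => //; rewrite idx_eq.
by move=> _ /mapP[x xs ->]; rewrite mem_iota; have [] := idxP x xs.
Qed.

Lemma chains_le_key_range (P : pt -> Prop) (key : pt -> int) (lo : int) (n : nat) :
  {homo key : x y / diag_lt x y >-> x < y} ->
  (forall w, P w -> lo <= key w < lo + n%:Z) -> chains_le P n.
Proof.
move=> key_mono key_range c [cP c_sorted]; rewrite -(size_map key).
apply: (uniq_size_le_range (lo := lo)); last first.
  by move=> _ /mapP[w /cP w_P ->]; apply: key_range.
apply: (sorted_uniq lt_trans ltxx); rewrite sorted_map.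
exact: sub_sorted c_sorted.
Qed.

Lemma chains_le_adjoin (C V : pt -> Prop) (u : nat) :
  chains_le C u ->
  (forall x, V x -> exists n1 n2, [/\ (n1 + n2 < u)%N,
      chains_le (fun y => (C y \/ V y) /\ diag_lt y x) n1 &
      chains_le (fun y => (C y \/ V y) /\ diag_lt x y) n2]) ->
  chains_le (fun w => C w \/ V w) u.
Proof.
move=> C_chains V_split c [cD c_sorted].
have [[x x_c Vx] | no_V] := classic (exists2 x, x \in c & V x); last first.
  apply: C_chains; split=> // w w_c.
  by case: (cD w w_c) => // Vw; case: no_V; exists w.
have [n1 [n2 [n_lt below above]]] := V_split x Vx.
case/splitPr: x_c cD c_sorted => c1 c2 cD.
rewrite (sorted_pairwise diag_lt_trans) pairwise_cat pairwise_cons.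
case/and3P=> /allrelP c1_x c1_pw /andP[/allP x_c2 c2_pw].
have /below : diag_chain (fun y => (C y \/ V y) /\ diag_lt y x) c1.
  split; last by rewrite (sorted_pairwise diag_lt_trans).
  move=> y y_c1; split; first by apply: cD; rewrite mem_cat y_c1.
  by apply: c1_x; rewrite ?mem_head.
have /above : diag_chain (fun y => (C y \/ V y) /\ diag_lt x y) c2.
  split; last by rewrite (sorted_pairwise diag_lt_trans).
  move=> y y_c2; split; last exact: x_c2.
  by apply: cD; rewrite mem_cat inE y_c2 !orbT.
by rewrite size_cat /=; lia.
Qed.

Lemma chains_le_of_cover u S E H C :
  path_family u S E H -> covers u H C -> chains_le C u.
Proof.
move=> [H_paths _] H_cover c [cC c_sorted].
apply: (size_le_of_cover (A := H)); first exact: (sorted_uniq diag_lt_trans diag_lt_irr).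
  by move=> x /cC /H_cover.
move=> p p_range x y xc yc x_p y_p; apply/eqP; apply: contraT => x_ne_y.
have no_diag := lpath_no_diag (H_paths p p_range).
have := sorted_diag_comparable c_sorted xc yc x_ne_y.
by rewrite (negbTE (no_diag _ _ x_p y_p)) (negbTE (no_diag _ _ y_p x_p)).
Qed.

Lemma antidiagonal_eq (v w : pt) : v.1 - v.2 = w.1 - w.2 -> v.1 = w.1 \/ v.2 = w.2 -> v = w.
Proof. by case: v w => [v1 v2] [w1 w2] /= diff_eq [] ?; congr pair; lia. Qed.

Lemma family_crossings u S E H (d : int) (m : nat) :
  path_family u S E H -> (m <= u)%N ->
  (forall p, (1 <= p <= m)%N -> (E p).1 - (E p).2 <= d <= (S p).1 - (S p).2) ->
  exists s : seq pt, [/\ uniq s, size s = m &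
    forall v : pt, v \in s -> v.1 - v.2 = d /\ exists2 p, (1 <= p <= m)%N & v \in H p].
Proof.
move=> [H_paths H_disj] m_le d_range.
pose cross p := nth (0, 0) (H p) (find (fun v : pt => v.1 - v.2 == d) (H p)).
have crossP p : (1 <= p <= m)%N -> cross p \in H p /\ (cross p).1 - (cross p).2 = d.
  move=> p_range; have p_u : (1 <= p <= u)%N by lia.
  have has_d := lpath_meets_antidiagonal (H_paths p p_u) (d_range p p_range).
  rewrite /cross; split; first by apply: mem_nth; rewrite -has_find.
  by apply/eqP; exact: (nth_find (0, 0) has_d).
exists [seq cross p | p <- iota 1 m]; split; last 2 first.
- by rewrite size_map size_iota.
- move=> v /mapP[p]; rewrite mem_iota => p_range ->.
  have {}p_range : (1 <= p <= m)%N by lia.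
  by have [? ?] := crossP p p_range; split=> //; exists p.
rewrite map_inj_in_uniq ?iota_uniq // => p q; rewrite !mem_iota => p_range q_range pq.
apply/eqP; apply: contraT => /eqP p_ne_q; exfalso.
have {}p_range : (1 <= p <= m)%N by lia.
have {}q_range : (1 <= q <= m)%N by lia.
have [[p_cross _] [q_cross _]] := (crossP p p_range, crossP q q_range).
by apply: (H_disj p q _ _ p_ne_q (cross p) p_cross); rewrite ?pq //; lia.
Qed.

(** * Ranks and levels *)

Definition pt_le (v w : pt) : bool := (v.1 <= w.1) && (v.2 <= w.2).

Definition rank_ge (D : pt -> Prop) (p : nat) (v : pt) : Prop :=
  exists2 c, diag_chain (fun w => D w /\ pt_le w v) c & (p <= size c)%N.

Definition on_level (D : pt -> Prop) (p : nat) (v : pt) : Prop :=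
  rank_ge D p v /\ ~ rank_ge D p (v.1 - 1, v.2 - 1).

Section Rank.

Variable D : pt -> Prop.

Lemma rank_ge_mono p v w : rank_ge D p v -> pt_le v w -> rank_ge D p w.
Proof.
move=> [c [cD c_sorted] p_le] vw; exists c => //; split=> // x /cD[Dx xv].
by split=> //; move: xv vw; rewrite /pt_le; lia.
Qed.

Lemma rank_geW p q v : (q <= p)%N -> rank_ge D p v -> rank_ge D q v.
Proof. by move=> qp [c c_chain p_le]; exists c => //; apply: leq_trans p_le. Qed.

Lemma rank_ge_key_range p v (key : pt -> int) (lo : int) (n : nat) :
  {homo key : x y / diag_lt x y >-> x < y} ->
  (forall w, D w -> pt_le w v -> lo <= key w < lo + n%:Z) ->
  rank_ge D p v -> (p <= n)%N.
Proof.
move=> key_mono key_range [c c_chain p_le]; apply: leq_trans p_le _.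
by apply: chains_le_key_range key_mono _ c c_chain => w [Dw wv]; apply: key_range.
Qed.

Lemma rank_ge_pred p v : rank_ge D p.+1 v -> rank_ge D p (v.1 - 1, v.2 - 1).
Proof.
case=> c; case/lastP: c => [//|c x] [cD]; rewrite size_rcons ltnS => c_sorted p_le.
exists c => //; move: c_sorted.
rewrite (sorted_pairwise diag_lt_trans) -cats1 pairwise_cat.
case/and3P=> /allrelP c_x c_pw _; split; last by rewrite (sorted_pairwise diag_lt_trans).
move=> y y_c; have /cD[Dy _] : y \in rcons c x by rewrite mem_rcons inE y_c orbT.
have /cD[_ xv] : x \in rcons c x by rewrite mem_rcons mem_head.
by split=> //; have := c_x y x y_c (mem_head _ _); move: xv; rewrite /pt_le /diag_lt /=; lia.
Qed.

Lemma rank_ge_succ p v : D v -> rank_ge D p (v.1 - 1, v.2 - 1) -> rank_ge D p.+1 v.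
Proof.
move=> Dv [c [cD c_sorted] p_le]; exists (rcons c v); last by rewrite size_rcons.
split.
  move=> w; rewrite mem_rcons inE => /predU1P[->|/cD[Dw wv]]; split=> //.
    by rewrite /pt_le !lexx.
  by move: wv; rewrite /pt_le /=; lia.
rewrite (sorted_pairwise diag_lt_trans) -cats1 pairwise_cat /= andbT.
rewrite -(sorted_pairwise diag_lt_trans) c_sorted andbT; apply/allrelP => w y w_c.
by rewrite inE => /eqP ->; have [_] := cD w w_c; rewrite /pt_le /diag_lt /=; lia.
Qed.

Lemma rank_ge_seq (f : nat -> pt) p v :
  (forall k, diag_lt (f k) (f k.+1)) ->
  (forall k, (1 <= k <= p)%N -> D (f k) /\ pt_le (f k) v) -> rank_ge D p v.
Proof.
move=> f_incr f_below; exists [seq f k | k <- iota 1 p]; last by rewrite size_map size_iota.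
split; first by move=> w /mapP[k]; rewrite mem_iota => k_range ->; apply: f_below; lia.
case: p {f_below} => //= p; elim: p 1%N => //= p IH m.
by rewrite f_incr IH.
Qed.

Lemma on_level_disjoint p q v : (p < q)%N -> on_level D p v -> on_level D q v -> False.
Proof. by move=> pq [_ not_p] [q_v _]; apply/not_p/rank_ge_pred/(rank_geW pq). Qed.

Lemma on_level_of_rank p v : D v -> rank_ge D p v -> ~ rank_ge D p.+1 v -> on_level D p v.
Proof. by move=> Dv p_v not_p1; split=> // p_v'; apply/not_p1/rank_ge_succ. Qed.

Lemma on_level_witness p v (f : nat -> pt) (key : pt -> int) (lo : int) :
  (0 < p)%N -> (forall k, diag_lt (f k) (f k.+1)) ->
  (forall k, (1 <= k <= p)%N -> D (f k) /\ pt_le (f k) v) ->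
  {homo key : x y / diag_lt x y >-> x < y} ->
  (forall w, D w -> pt_le w (v.1 - 1, v.2 - 1) -> lo <= key w < lo + p.-1%:Z) ->
  on_level D p v.
Proof.
move=> p_gt0 f_incr f_below key_mono key_range; split; first exact: rank_ge_seq f_below.
by move/(rank_ge_key_range key_mono key_range); lia.
Qed.

End Rank.

Lemma nat_threshold (P : nat -> Prop) (m n : nat) :
  (m <= n)%N -> P m -> ~ P n -> exists k, [/\ (m <= k < n)%N, P k & ~ P k.+1].
Proof.
elim: n => [|n IH] m_le Pm notPn; first by case: m m_le Pm.
have [m_eq|m_le'] := eqVneq m n.+1; first by rewrite m_eq in Pm.
have [Pn|notPn'] := classic (P n); first by exists n; split=> //; lia.
by have [|k [k_range Pk notPk1]] := IH _ Pm notPn'; [lia | exists k; split=> //; lia].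
Qed.

(* The northernmost row [i] with [rank_ge D p (i, j)]; an arbitrary value if there is none. *)
Definition level_row (D : pt -> Prop) (p : nat) (j : int) : int :=
  epsilon (inhabits 0) (fun i => rank_ge D p (i, j) /\ ~ rank_ge D p (i - 1, j)).

Definition level_bound (D : pt -> Prop) (p : nat) (s e : pt) (j : int) : int :=
  if j < s.2 then s.1 else if j < e.2 then level_row D p j else e.1.

Definition level_path (D : pt -> Prop) (p : nat) (s e : pt) : seq pt :=
  staircase (level_bound D p s e) s.2 (absz (e.2 - s.2)%R).

Definition in_span (s e v : pt) : Prop :=
  [/\ s.2 <= v.2 <= e.2, v.2 = s.2 -> v.1 <= s.1 & v.2 = e.2 -> e.1 <= v.1].

Section LevelPath.

Variables (D : pt -> Prop) (p : nat) (L : int) (s e : pt).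
Hypothesis D_row_ge : forall w, D w -> L <= w.1.
Hypothesis p_gt0 : (0 < p)%N.
Hypothesis s_on : on_level D p s.

Lemma rank_ge_row_ge (i j : int) : rank_ge D p (i, j) -> L <= i.
Proof.
case=> -[|w c] [cD _] /= p_le; first by move: p_gt0 p_le; lia.
by have [/D_row_ge] := cD w (mem_head _ _); rewrite /pt_le /=; lia.
Qed.

Lemma level_rowP (j i : int) : s.2 <= j -> rank_ge D p (i, j) <-> level_row D p j <= i.
Proof.
move=> j_ge; have s_j : rank_ge D p (s.1, j).
  by apply: (rank_ge_mono (proj1 s_on)); rewrite /pt_le /=; lia.
have [at_row not_above] : rank_ge D p (level_row D p j, j) /\
                          ~ rank_ge D p (level_row D p j - 1, j).
  apply: (epsilon_spec (inhabits 0) (fun i => rank_ge D p (i, j) /\ ~ rank_ge D p (i - 1, j))).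
  have below_L : ~ rank_ge D p (L - 1 + 0%:Z, j) by move/rank_ge_row_ge; lia.
  have at_s : ~ ~ rank_ge D p (L - 1 + (absz (s.1 - L + 1)%R)%:Z, j).
    by rewrite (_ : L - 1 + _ = s.1) //; have := rank_ge_row_ge s_j; lia.
  have [k [_ not_k k1]] := nat_threshold (P := fun k => ~ rank_ge D p (L - 1 + k%:Z, j))
    (leq0n _) below_L at_s.
  exists (L - 1 + k.+1%:Z); rewrite (_ : L - 1 + k.+1%:Z - 1 = L - 1 + k%:Z); last by lia.
  by split=> //; apply: NNPP.
split=> [i_j | row_le]; last by apply: (rank_ge_mono at_row); rewrite /pt_le /=; lia.
rewrite leNgt; apply/negP => lt_row; apply: not_above.
by apply: (rank_ge_mono i_j); rewrite /pt_le /=; lia.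
Qed.

Hypotheses (e_on : on_level D p e) (s_le_e : s.2 <= e.2) (e_le_s : e.1 <= s.1).

Local Notation t := (level_bound D p s e).

Lemma level_bound_start : t (s.2 - 1) = s.1.
Proof. by rewrite /level_bound ltrBlDr ltrDl ltr01. Qed.

Lemma level_bound_end : t e.2 = e.1.
Proof. by rewrite /level_bound ltNge s_le_e ltxx. Qed.

Lemma level_bound_mid (k : int) : s.2 <= k < e.2 -> t k = level_row D p k.
Proof.
move=> k_range; rewrite /level_bound ifF; last by apply/negbTE; rewrite -leNgt; lia.
by rewrite ifT //; lia.
Qed.

Lemma level_bound_rank (k : int) : s.2 <= k <= e.2 -> rank_ge D p (t k, k).
Proof.
move=> k_range; have [k_lt|k_ge] := ltP k e.2; last first.
  by rewrite (_ : k = e.2) ?level_bound_end; [exact: (proj1 e_on) | lia].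
by rewrite level_bound_mid; [apply/level_rowP|]; lia.
Qed.

Lemma level_bound_prev_rank (k : int) : s.2 <= k <= e.2 -> rank_ge D p (t (k - 1), k).
Proof.
move=> k_range; have [->|k_gt] := eqVneq k s.2.
  by rewrite level_bound_start; exact: (proj1 s_on).
by apply: (rank_ge_mono (level_bound_rank (k := k - 1) _)); try lia; rewrite /pt_le /=; lia.
Qed.

Lemma level_bound_prev_not_rank (k : int) : s.2 <= k <= e.2 -> ~ rank_ge D p (t (k - 1) - 1, k - 1).
Proof.
move=> k_range; have [->|k_gt] := eqVneq k s.2.
  by rewrite level_bound_start; exact: (proj2 s_on).
by rewrite level_bound_mid ?level_rowP; lia.
Qed.

Lemma level_bound_nonincr (k : int) : s.2 <= k <= e.2 -> t k <= t (k - 1).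
Proof.
move=> k_range; have [k_lt|k_ge] := ltP k e.2.
  rewrite (level_bound_mid (k := k)); last by lia.
  by rewrite -level_rowP; [apply: level_bound_prev_rank | ]; lia.
rewrite (_ : k = e.2) ?level_bound_end; last by lia.
have [->|e_gt] := eqVneq e.2 s.2; first by rewrite level_bound_start.
rewrite leNgt; apply/negP => lt_e; apply: (proj2 e_on).
by apply: (rank_ge_mono (level_bound_rank (k := e.2 - 1) _)); try lia; rewrite /pt_le /=; lia.
Qed.

Lemma lpath_level_path : lpath s e (level_path D p s e).
Proof.
have := @lpath_staircase t s.2 (absz (e.2 - s.2)%R) _.
rewrite level_bound_start (_ : s.2 + _ = e.2) ?level_bound_end; last by lia.
by rewrite -!surjective_pairing; apply=> k k_range; apply: level_bound_nonincr; lia.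
Qed.

Lemma mem_level_path (v : pt) : v \in level_path D p s e <-> on_level D p v /\ in_span s e v.
Proof.
rewrite /level_path mem_staircase => [|k k_range]; last by apply: level_bound_nonincr; lia.
case: v => i k; rewrite /in_span /=; split.
  case/andP=> k_range /andP[t_le le_t]; split.
    split; first by apply: (rank_ge_mono (level_bound_rank (k := k) _)); rewrite /pt_le /=; lia.
    move=> /= above; apply: (level_bound_prev_not_rank (k := k)); first lia.
    by apply: (rank_ge_mono above); rewrite /pt_le /=; lia.
  split=> [|k_s|k_e]; first lia.
    by move: le_t; rewrite k_s level_bound_start.
  by move: t_le; rewrite k_e level_bound_end.
case=> -[k_rank not_prev] [/= k_range k_s k_e]; apply/andP; split; first lia.
apply/andP; split.
  have [k_lt|k_ge] := ltP k e.2; last by rewrite (_ : k = e.2) ?level_bound_end; lia.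
  by rewrite level_bound_mid -?level_rowP //; lia.
have [k_eq|k_gt] := eqVneq k s.2; first by rewrite k_eq level_bound_start; lia.
rewrite leNgt; apply/negP => lt_i; apply: not_prev.
by apply: (rank_ge_mono (level_bound_rank (k := k - 1) _)); try lia; rewrite /pt_le /=; lia.
Qed.

End LevelPath.

Lemma level_family (u : nat) (C D : pt -> Prop) (S E : nat -> pt) (L : int) :
  (forall v, C v -> D v) -> chains_le D u -> (forall w, D w -> L <= w.1) ->
  (forall p, (1 <= p <= u)%N ->
     [/\ on_level D p (S p), on_level D p (E p), (S p).2 <= (E p).2 & (E p).1 <= (S p).1]) ->
  (forall c p, C c -> (1 <= p <= u)%N -> on_level D p c -> in_span (S p) (E p) c) ->
  exists H, path_family u S E H /\ covers u H C.
Proof.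
move=> CD D_chains D_row_ge ends C_span.
have mem_H p v : (1 <= p <= u)%N ->
    v \in level_path D p (S p) (E p) <-> on_level D p v /\ in_span (S p) (E p) v.
  move=> p_range; have [S_on E_on SE2 SE1] := ends p p_range.
  by apply: (mem_level_path D_row_ge) => //; lia.
exists (fun p => level_path D p (S p) (E p)); split; first split.
- move=> p p_range; have [S_on E_on SE2 SE1] := ends p p_range.
  by apply: (lpath_level_path D_row_ge) => //; lia.
- move=> p q p_range q_range p_ne v /(mem_H p v p_range)[v_p _] /(mem_H q v q_range)[v_q _].
  case: (ltngtP p q) => [pq|qp|pq]; last exact: p_ne pq.
  + exact: on_level_disjoint pq v_p v_q.
  + exact: on_level_disjoint qp v_q v_p.
- move=> c Cc; have rank1 : rank_ge D 1 c by apply: rank_ge_succ (CD c Cc) _; exists [::].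
  have no_rank : ~ rank_ge D u.+1 c.
    case=> c' [c'D c'_sorted]; apply/negP; rewrite -ltnNge ltnS.
    by apply: D_chains; split=> // w /c'D[].
  have [p [p_range c_p not_c_p1]] := nat_threshold (P := rank_ge D ^~ c) (ltn0Sn u) rank1 no_rank.
  have {}p_range : (1 <= p <= u)%N by lia.
  exists p => //; apply/(mem_H p c p_range).
  have c_on := on_level_of_rank (CD c Cc) c_p not_c_p1.
  by split=> //; apply: C_span.
Qed.

(** * Path families for (i), (ii) and (ii') *)

Lemma in_hexagon_lin_le a b u (v : pt) (al be ga : int) :
  (forall k : 'I_6, al * (nth (0, 0) (hex_verts a b u) k).1 +
                    be * (nth (0, 0) (hex_verts a b u) k).2 <= ga) ->
  in_hexagon a b u v -> al * v.1 + be * v.2 <= ga.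
Proof.
move=> verts_le [w [w_ge0 [w_sum [w_x w_y]]]].
set X := fun k : 'I_6 => (nth (0, 0) (hex_verts a b u) k).1 in w_x verts_le.
set Y := fun k : 'I_6 => (nth (0, 0) (hex_verts a b u) k).2 in w_y verts_le.
have combo : ((al * v.1 + be * v.2)%:~R : rat) = \sum_(k < 6) w k * (al * X k + be * Y k)%:~R.
  rewrite intrD !intrM -w_x -w_y !mulr_sumr -big_split /=; apply: eq_bigr => k _.
  by rewrite intrD !intrM; ring.
rewrite -(ler_int rat) combo; apply: le_trans (_ : _ <= \sum_(k < 6) w k * ga%:~R) _.
  apply: ler_sum => k _; apply: ler_wpM2l; first exact: w_ge0.
  by rewrite ler_int; apply: verts_le.
by rewrite -mulr_suml w_sum mul1r.
Qed.

Lemma in_hexagon_bounds a b u (v : pt) :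
  (0 < u)%N -> (u <= minn a b)%N -> in_hexagon a b u v ->
  [/\ 1 <= v.1 <= a%:Z, 1 <= v.2 <= b%:Z, v.1 - v.2 <= a%:Z - u%:Z & v.2 - v.1 <= b%:Z - u%:Z].
Proof.
move=> u_gt0; rewrite leq_min => /andP[u_le_a u_le_b] v_hex.
have le := fun al be ga verts_le => @in_hexagon_lin_le a b u v al be ga verts_le v_hex.
have := le (-1) 0 (-1) (ltac:(case=> [[|[|[|[|[|[|k]]]]]] k_lt] //=; lia)).
have := le 1 0 a%:Z (ltac:(case=> [[|[|[|[|[|[|k]]]]]] k_lt] //=; lia)).
have := le 0 (-1) (-1) (ltac:(case=> [[|[|[|[|[|[|k]]]]]] k_lt] //=; lia)).
have := le 0 1 b%:Z (ltac:(case=> [[|[|[|[|[|[|k]]]]]] k_lt] //=; lia)).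
have := le 1 (-1) (a%:Z - u%:Z) (ltac:(case=> [[|[|[|[|[|[|k]]]]]] k_lt] //=; lia)).
have := le (-1) 1 (b%:Z - u%:Z) (ltac:(case=> [[|[|[|[|[|[|k]]]]]] k_lt] //=; lia)).
by split; lia.
Qed.

Definition on_chains (u : nat) (f g : nat -> pt) (w : pt) : Prop :=
  exists2 p, (1 <= p <= u)%N & (w = f p \/ w = g p).

Section HexagonFamily.

Variables (a b u : nat) (C : pt -> Prop).
Hypothesis u_gt0 : (0 < u)%N.
Hypothesis u_le_min : (u <= minn a b)%N.
Hypothesis C_hex : forall v, C v -> in_hexagon a b u v.

Let D w := C w \/ on_chains u (hexX a u) (hexY b u) w.

Lemma hexagon_adjoined_bounds w : D w ->
  [/\ 1 <= w.1 <= a%:Z, 1 <= w.2 <= b%:Z, w.1 - w.2 <= a%:Z - u%:Z & w.2 - w.1 <= b%:Z - u%:Z].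
Proof.
have := u_le_min; rewrite leq_min => /andP[u_le_a u_le_b].
case=> [/C_hex /(in_hexagon_bounds u_gt0 u_le_min) //|[p p_range [->|->]]] /=; split; lia.
Qed.

Lemma hexagon_adjoined_chains_le : chains_le C u -> chains_le D u.
Proof.
move=> C_chains; apply: chains_le_adjoin => // x [p p_range [->|->]].
all: exists p.-1, (u - p)%N; split; first lia.
- apply: (chains_le_key_range (lo := 1)) diag_lt_snd _ => w.
  by case=> /hexagon_adjoined_bounds[? ? ? ?]; rewrite /diag_lt /=; lia.
- apply: (chains_le_key_range (lo := a%:Z - u%:Z + p%:Z + 1)) diag_lt_fst _ => w.
  by case=> /hexagon_adjoined_bounds[? ? ? ?]; rewrite /diag_lt /=; lia.
- apply: (chains_le_key_range (lo := 1)) diag_lt_fst _ => w.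
  by case=> /hexagon_adjoined_bounds[? ? ? ?]; rewrite /diag_lt /=; lia.
- apply: (chains_le_key_range (lo := b%:Z - u%:Z + p%:Z + 1)) diag_lt_snd _ => w.
  by case=> /hexagon_adjoined_bounds[? ? ? ?]; rewrite /diag_lt /=; lia.
Qed.

Lemma hexagon_family : chains_le C u ->
  exists H, path_family u (hexX a u) (hexY b u) H /\ covers u H C.
Proof.
move=> C_chains; have := u_le_min; rewrite leq_min => /andP[u_le_a u_le_b].
have X_incr k : diag_lt (hexX a u k) (hexX a u k.+1) by rewrite /diag_lt /=; lia.
have Y_incr k : diag_lt (hexY b u k) (hexY b u k.+1) by rewrite /diag_lt /=; lia.
have X_D k : (1 <= k <= u)%N -> D (hexX a u k) by right; exists k => //; left.
have Y_D k : (1 <= k <= u)%N -> D (hexY b u k) by right; exists k => //; right.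
apply: (level_family (D := D) (L := 1)) (hexagon_adjoined_chains_le C_chains) _ _ _.
- by move=> v Cv; left.
- by move=> w /hexagon_adjoined_bounds[/andP[]].
- move=> p p_range; split; rewrite /=; try lia.
  + apply: (on_level_witness (lo := 1)) X_incr _ diag_lt_snd _; first lia.
      by move=> k k_range; split; [apply: X_D | rewrite /pt_le /=]; lia.
    by move=> w /hexagon_adjoined_bounds[? ? ? ?]; rewrite /pt_le /=; lia.
  + apply: (on_level_witness (lo := 1)) Y_incr _ diag_lt_fst _; first lia.
      by move=> k k_range; split; [apply: Y_D | rewrite /pt_le /=]; lia.
    by move=> w /hexagon_adjoined_bounds[? ? ? ?]; rewrite /pt_le /=; lia.
move=> c p Cc p_range [c_p not_c_p].
have := hexagon_adjoined_bounds (or_introl Cc) => -[/andP[? ?] /andP[? ?] ? ?].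
have p_le_c2 : (p <= absz c.2)%N.
  apply: (rank_ge_key_range (lo := 1) diag_lt_snd _ c_p) => w /hexagon_adjoined_bounds[? ? ? ?].
  by rewrite /pt_le; lia.
have c2_le_Y : c.2 <= b%:Z - u%:Z + p%:Z.
  rewrite leNgt; apply/negP => c2_gt; apply: not_c_p.
  apply: (rank_ge_seq Y_incr) => k k_range; split; first by apply: Y_D; lia.
  by rewrite /pt_le /=; lia.
by rewrite /in_span /=; split; lia.
Qed.

End HexagonFamily.

Lemma row_family_u_le a b u H :
  (u < a)%N -> path_family u (rowSW a u) (rowNE b) H -> (u <= b)%N.
Proof.
move=> u_lt_a fam; rewrite leqNgt; apply/negP => b_lt_u.
have [|s [s_uniq s_size s_cross]] := family_crossings (d := a%:Z - u%:Z) fam b_lt_u.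
  by move=> p p_range /=; lia.
suff: (size s <= b)%N by rewrite s_size ltnn.
rewrite -(size_map (@snd int int)); apply: (uniq_size_le_range (lo := 1)).
  rewrite map_inj_in_uniq // => v w /s_cross[v_d _] /s_cross[w_d _] vw.
  by apply: antidiagonal_eq; [rewrite v_d w_d | right].
move=> _ /mapP[v /s_cross[_ [p p_range v_p]] ->].
by have := lpath_box (proj1 fam p _) v_p; rewrite /weakly_ne /=; lia.
Qed.

Section RowFamily.

Variables (a b u : nat) (C : pt -> Prop).
Hypothesis u_lt_a : (u < a)%N.
Hypothesis u_le_b : (u <= b)%N.
Hypothesis C_grid : forall v, C v -> in_grid a b v.

(* Virtual points west of the grid, giving [rowSW a u p] a chain of size [p] to its north-west. *)
Let west k : pt := (a%:Z - u%:Z + k%:Z, k%:Z - u%:Z).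
Let D w := C w \/ on_chains u west (hexY b u) w.

Lemma row_adjoined_bounds w : D w ->
  [/\ 1 <= w.1 <= a%:Z, w.2 <= b%:Z & (w.2 <= 0 -> a%:Z - u%:Z + 1 <= w.1)].
Proof. by case=> [/C_grid[/andP[? ?] /andP[? ?]]|[p p_range [->|->]]] /=; split; lia. Qed.

Lemma row_adjoined_chains_le : chains_le C u -> chains_le D u.
Proof.
move=> C_chains; apply: chains_le_adjoin => // x [p p_range [->|->]].
all: exists p.-1, (u - p)%N; split; first lia.
- apply: (chains_le_key_range (lo := a%:Z - u%:Z + 1)) diag_lt_fst _ => w.
  by case=> /row_adjoined_bounds[? ? ?]; rewrite /diag_lt /=; lia.
- apply: (chains_le_key_range (lo := a%:Z - u%:Z + p%:Z + 1)) diag_lt_fst _ => w.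
  by case=> /row_adjoined_bounds[? ? ?]; rewrite /diag_lt /=; lia.
- apply: (chains_le_key_range (lo := 1)) diag_lt_fst _ => w.
  by case=> /row_adjoined_bounds[? ? ?]; rewrite /diag_lt /=; lia.
- apply: (chains_le_key_range (lo := b%:Z - u%:Z + p%:Z + 1)) diag_lt_snd _ => w.
  by case=> /row_adjoined_bounds[? ? ?]; rewrite /diag_lt /=; lia.
Qed.

Lemma row_family : chains_le C u ->
  exists H, path_family u (rowSW a u) (rowNE b) H /\ covers u H C.
Proof.
move=> C_chains.
have west_incr k : diag_lt (west k) (west k.+1) by rewrite /diag_lt /=; lia.
have Y_incr k : diag_lt (hexY b u k) (hexY b u k.+1) by rewrite /diag_lt /=; lia.
have west_D k : (1 <= k <= u)%N -> D (west k) by right; exists k => //; left.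
have Y_D k : (1 <= k <= u)%N -> D (hexY b u k) by right; exists k => //; right.
apply: (level_family (D := D) (L := 1)) (row_adjoined_chains_le C_chains) _ _ _.
- by move=> v Cv; left.
- by move=> w /row_adjoined_bounds[/andP[]].
- move=> p p_range; split; rewrite /=; try lia.
  + apply: (on_level_witness (lo := a%:Z - u%:Z + 1)) west_incr _ diag_lt_fst _; first lia.
      by move=> k k_range; split; [apply: west_D | rewrite /pt_le /=]; lia.
    by move=> w /row_adjoined_bounds[? ? ?]; rewrite /pt_le /=; lia.
  + apply: (on_level_witness (lo := 1)) Y_incr _ diag_lt_fst _; first lia.
      by move=> k k_range; split; [apply: Y_D | rewrite /pt_le /=]; lia.
    by move=> w /row_adjoined_bounds[? ? ?]; rewrite /pt_le /=; lia.
move=> c p Cc p_range [c_p not_c_p].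
have [/andP[c1_ge c1_le] /andP[c2_ge c2_le]] := C_grid Cc.
have p_le_c1 : (p <= absz c.1)%N.
  apply: (rank_ge_key_range (lo := 1) diag_lt_fst _ c_p) => w /row_adjoined_bounds[? ? ?].
  by rewrite /pt_le; lia.
have c1_le_west : c.2 = 1 -> c.1 <= a%:Z - u%:Z + p%:Z.
  move=> c2_eq; rewrite leNgt; apply/negP => c1_gt; apply: not_c_p.
  apply: (rank_ge_seq west_incr) => k k_range; split; first by apply: west_D; lia.
  by rewrite /pt_le /=; lia.
by rewrite /in_span /=; split; lia.
Qed.

End RowFamily.

Lemma row_family_straight a b u (C : pt -> Prop) :
  (0 < b)%N -> u = a -> (forall v, C v -> in_grid a b v) ->
  exists H, (path_family u (rowSW a u) (rowNE b) H /\ covers u H C) /\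
    (forall H', path_family u (rowSW a u) (rowNE b) H' /\ covers u H' C ->
       forall p, (1 <= p <= u)%N -> H' p = H p) /\
    (forall p, (1 <= p <= u)%N -> straight_horizontal (H p)).
Proof.
move=> b_gt0 -> C_grid.
pose row p := lattice_line (fun k => (p%:Z, 1 + k%:Z)) b.-1.
have row_path p : lpath (rowSW a a p) (rowNE b p) (row p).
  have -> : rowSW a a p = (p%:Z, 1 + 0%:Z) by rewrite /rowSW; congr pair; lia.
  have -> : rowNE b p = (p%:Z, 1 + b.-1%:Z) by rewrite /rowNE; congr pair; lia.
  apply: lpath_lattice_line => k.
  by rewrite /lstep /=; apply/orP; left; apply/eqP; congr pair; lia.
exists row; split; [split; [split|] | split].
- by move=> p _; apply: row_path.
- by move=> p q _ _ p_ne_q v /mapP[k _ ->] /mapP[k' _ [/p_ne_q]].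
- move=> v /C_grid[/andP[v1_ge v1_le] /andP[v2_ge v2_le]]; exists (absz v.1); first lia.
  apply/mapP; exists (absz (v.2 - 1)%R); first by rewrite mem_iota; lia.
  by rewrite [LHS]surjective_pairing; congr pair; lia.
- move=> H' [[H'_paths _] _] p p_range.
  by apply: lpath_straight_unique (H'_paths p p_range) (row_path p) _; left; rewrite /=; lia.
by move=> p _; rewrite /straight_horizontal /= path_map; apply/(pathP 0%N) => i _; exact: eqxx.
Qed.

Lemma column_family_u_le a b u H :
  (u < b)%N -> path_family u (colSW a) (colNE b u) H -> (u <= a)%N.
Proof.
move=> u_lt_b fam; rewrite leqNgt; apply/negP => a_lt_u.
have [|s [s_uniq s_size s_cross]] := family_crossings (d := u%:Z - b%:Z) fam a_lt_u.
  by move=> p p_range /=; lia.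
suff: (size s <= a)%N by rewrite s_size ltnn.
rewrite -(size_map (@fst int int)); apply: (uniq_size_le_range (lo := 1)).
  rewrite map_inj_in_uniq // => v w /s_cross[v_d _] /s_cross[w_d _] vw.
  by apply: antidiagonal_eq; [rewrite v_d w_d | left].
move=> _ /mapP[v /s_cross[_ [p p_range v_p]] ->].
by have := lpath_box (proj1 fam p _) v_p; rewrite /weakly_ne /=; lia.
Qed.

Section ColumnFamily.

Variables (a b u : nat) (C : pt -> Prop).
Hypothesis u_lt_b : (u < b)%N.
Hypothesis u_le_a : (u <= a)%N.
Hypothesis C_grid : forall v, C v -> in_grid a b v.

(* Virtual points north of the grid, giving [colNE b u p] a chain of size [p] to its north-west. *)
Let north k : pt := (k%:Z - u%:Z, b%:Z - u%:Z + k%:Z).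
Let D w := C w \/ on_chains u (hexX a u) north w.

Lemma column_adjoined_bounds w : D w ->
  [/\ 1 - u%:Z <= w.1 <= a%:Z, 1 <= w.2 <= b%:Z & (w.1 <= 0 -> b%:Z - u%:Z + 1 <= w.2)].
Proof. by case=> [/C_grid[/andP[? ?] /andP[? ?]]|[p p_range [->|->]]] /=; split; lia. Qed.

Lemma column_adjoined_chains_le : chains_le C u -> chains_le D u.
Proof.
move=> C_chains; apply: chains_le_adjoin => // x [p p_range [->|->]].
all: exists p.-1, (u - p)%N; split; first lia.
- apply: (chains_le_key_range (lo := 1)) diag_lt_snd _ => w.
  by case=> /column_adjoined_bounds[? ? ?]; rewrite /diag_lt /=; lia.
- apply: (chains_le_key_range (lo := a%:Z - u%:Z + p%:Z + 1)) diag_lt_fst _ => w.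
  by case=> /column_adjoined_bounds[? ? ?]; rewrite /diag_lt /=; lia.
- apply: (chains_le_key_range (lo := b%:Z - u%:Z + 1)) diag_lt_snd _ => w.
  by case=> /column_adjoined_bounds[? ? ?]; rewrite /diag_lt /=; lia.
- apply: (chains_le_key_range (lo := b%:Z - u%:Z + p%:Z + 1)) diag_lt_snd _ => w.
  by case=> /column_adjoined_bounds[? ? ?]; rewrite /diag_lt /=; lia.
Qed.

Lemma column_family : chains_le C u ->
  exists H, path_family u (colSW a) (colNE b u) H /\ covers u H C.
Proof.
move=> C_chains.
have X_incr k : diag_lt (hexX a u k) (hexX a u k.+1) by rewrite /diag_lt /=; lia.
have north_incr k : diag_lt (north k) (north k.+1) by rewrite /diag_lt /=; lia.
have X_D k : (1 <= k <= u)%N -> D (hexX a u k) by right; exists k => //; left.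
have north_D k : (1 <= k <= u)%N -> D (north k) by right; exists k => //; right.
apply: (level_family (D := D) (L := 1 - u%:Z)) (column_adjoined_chains_le C_chains) _ _ _.
- by move=> v Cv; left.
- by move=> w /column_adjoined_bounds[/andP[]].
- move=> p p_range; split; rewrite /=; try lia.
  + apply: (on_level_witness (lo := 1)) X_incr _ diag_lt_snd _; first lia.
      by move=> k k_range; split; [apply: X_D | rewrite /pt_le /=]; lia.
    by move=> w /column_adjoined_bounds[? ? ?]; rewrite /pt_le /=; lia.
  + apply: (on_level_witness (lo := b%:Z - u%:Z + 1)) north_incr _ diag_lt_snd _; first lia.
      by move=> k k_range; split; [apply: north_D | rewrite /pt_le /=]; lia.
    by move=> w /column_adjoined_bounds[? ? ?]; rewrite /pt_le /=; lia.
move=> c p Cc p_range [c_p not_c_p].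
have [/andP[c1_ge c1_le] /andP[c2_ge c2_le]] := C_grid Cc.
have p_le_c2 : (p <= absz c.2)%N.
  apply: (rank_ge_key_range (lo := 1) diag_lt_snd _ c_p) => w /column_adjoined_bounds[? ? ?].
  by rewrite /pt_le; lia.
have c2_le_north : c.2 <= b%:Z - u%:Z + p%:Z.
  rewrite leNgt; apply/negP => c2_gt; apply: not_c_p.
  apply: (rank_ge_seq north_incr) => k k_range; split; first by apply: north_D; lia.
  by rewrite /pt_le /=; lia.
by rewrite /in_span /=; split; lia.
Qed.

End ColumnFamily.

Lemma column_family_straight a b u (C : pt -> Prop) :
  (0 < a)%N -> u = b -> (forall v, C v -> in_grid a b v) ->
  exists H, (path_family u (colSW a) (colNE b u) H /\ covers u H C) /\
    (forall H', path_family u (colSW a) (colNE b u) H' /\ covers u H' C ->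
       forall p, (1 <= p <= u)%N -> H' p = H p) /\
    (forall p, (1 <= p <= u)%N -> straight_vertical (H p)).
Proof.
move=> a_gt0 -> C_grid.
pose column q := lattice_line (fun k => (a%:Z - k%:Z, q%:Z)) a.-1.
have column_path q : lpath (colSW a q) (colNE b b q) (column q).
  have -> : colSW a q = (a%:Z - 0%:Z, q%:Z) by rewrite /colSW; congr pair; lia.
  have -> : colNE b b q = (a%:Z - a.-1%:Z, q%:Z) by rewrite /colNE; congr pair; lia.
  apply: lpath_lattice_line => k.
  by rewrite /lstep /=; apply/orP; right; apply/eqP; congr pair; lia.
exists column; split; [split; [split|] | split].
- by move=> q _; apply: column_path.
- by move=> p q _ _ p_ne_q v /mapP[k _ ->] /mapP[k' _ [_ /p_ne_q]].
- move=> v /C_grid[/andP[v1_ge v1_le] /andP[v2_ge v2_le]]; exists (absz v.2); first lia.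
  apply/mapP; exists (absz (a%:Z - v.1)%R); first by rewrite mem_iota; lia.
  by rewrite [LHS]surjective_pairing; congr pair; lia.
- move=> H' [[H'_paths _] _] q q_range.
  by apply: lpath_straight_unique (H'_paths q q_range) (column_path q) _; right; rewrite /=; lia.
by move=> q _; rewrite /straight_vertical /= path_map; apply/(pathP 0%N) => i _; exact: eqxx.
Qed.

Theorem lemma2p6 (a b u : nat) :
  (0 < a)%N -> (0 < b)%N -> (0 < u)%N ->
  (* (i) *)
  ((u <= minn a b)%N ->
    forall C : pt -> Prop, (forall v, C v -> in_hexagon a b u v) ->
      ((exists H, path_family u (hexX a u) (hexY b u) H /\ covers u H C)
        <-> chains_le C u))
  /\
  (* (ii) *)
  (forall C : pt -> Prop, (forall v, C v -> in_grid a b v) ->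
    ((u < a)%N ->
      ((exists H, path_family u (rowSW a u) (rowNE b) H /\ covers u H C)
        <-> ((u <= b)%N /\ chains_le C u)))
    /\
    (u = a ->
      exists H, (path_family u (rowSW a u) (rowNE b) H /\ covers u H C) /\
        (forall H', path_family u (rowSW a u) (rowNE b) H' /\ covers u H' C ->
           forall p, (1 <= p <= u)%N -> H' p = H p) /\
        (forall p, (1 <= p <= u)%N -> straight_horizontal (H p))))
  /\
  (* (ii') *)
  (forall C : pt -> Prop, (forall v, C v -> in_grid a b v) ->
    ((u < b)%N ->
      ((exists H, path_family u (colSW a) (colNE b u) H /\ covers u H C)
        <-> ((u <= a)%N /\ chains_le C u)))
    /\
    (u = b ->
      exists H, (path_family u (colSW a) (colNE b u) H /\ covers u H C) /\
        (forall H', path_family u (colSW a) (colNE b u) H' /\ covers u H' C ->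
           forall p, (1 <= p <= u)%N -> H' p = H p) /\
        (forall p, (1 <= p <= u)%N -> straight_vertical (H p)))).
Proof.
move=> a_gt0 b_gt0 u_gt0; split; [|split] => [u_le C C_hex | C C_grid | C C_grid].
- split; first by case=> H [fam cover]; apply: chains_le_of_cover fam cover.
  exact: hexagon_family.
- split=> [u_lt_a | u_eq_a]; last exact: row_family_straight.
  split=> [[H [fam cover]] | [u_le_b C_chains]]; last exact: row_family.
  by split; [apply: row_family_u_le fam | apply: chains_le_of_cover fam cover].
- split=> [u_lt_b | u_eq_b]; last exact: column_family_straight.
  split=> [[H [fam cover]] | [u_le_a C_chains]]; last exact: column_family.
  by split; [apply: column_family_u_le fam | apply: chains_le_of_cover fam cover].
Qed.
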